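(* Let $\sigma=(k_1,\ldots,k_\ell)$ be a tuple of positive integers with $\ell\ge 2$ and $K=\sum_{i=1}^\ell k_i\ge 2$. Let $C_\sigma=\sum_{j=0}^{\ell-1}3^{\ell-1-j}2^{k_1+\cdots+k_j}$ and $\rho=C_\sigma/(2^K-3^\ell)\in\mathbb Z_2$. Define $x_0=\rho$ and $x_j=T(x_{j-1})$ for $j\ge 1$, where $T(x)=(3x+1)/2^{v_2(3x+1)}$ on $2$-adic integers $x$ with $3x+1\neq 0$. Then $v_2(3x_{j-1}+1)=k_j$ for each $j=1,\ldots,\ell$ (i.e. $\sigma$ is a phantom family: the $2$-adic root $\rho$ realizes the valuation pattern $\sigma$).
   Context: $\mathbb Z_2$ is the ring of $2$-adic integers; $2^K-3^\ell$ is odd, hence a unit in $\mathbb Z_2$. $v_2$ is the $2$-adic valuation on $\mathbb Z_2$; the empty sum $k_1+\cdots+k_0$ is $0$. *)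

From mathcomp Require Import all_boot all_order all_algebra.
Set Implicit Arguments. Unset Strict Implicit. Unset Printing Implicit Defensive.
Import Order.TTheory GRing.Theory Num.Theory.
Local Open Scope ring_scope.

(* 2-adic valuation on rationals (the orbit lives in Z_(2) = Q ∩ Z_2, and
   v2 below is the restriction of the 2-adic valuation); v2 0 := 0 (junk). *)
Definition v2 (q : rat) : int :=
  if q == 0 then 0 else (logn 2 `|numq q|)%:Z - (logn 2 `|denq q|)%:Z.

Definition T (x : rat) : rat := (3 * x + 1) / (2%:Q ^ (v2 (3 * x + 1))).

(* sigma = (k_1,...,k_l) is the sequence s, k_{i+1} = nth 0 s i *)
Definition Csigma (s : seq nat) : nat :=
  (\sum_(j < size s) 3 ^ (size s - 1 - j) * 2 ^ (\sum_(i < j) nth 0 s i))%N.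

Definition rho (s : seq nat) : rat :=
  (Csigma s)%:R / ((2 ^ sumn s)%N%:R - (3 ^ size s)%N%:R).

Definition orbitx (s : seq nat) (j : nat) : rat := iter j T (rho s).

From mathcomp Require Import all_boot all_order all_algebra.
From mathcomp Require Import zify ring lra.
Import GRing.Theory Num.Theory.
Local Open Scope ring_scope.

(* Let D = 2^K - 3^l, an odd integer.  Splitting off the first, resp. last,
   term of C gives C(k :: t) = 3^|t| + 2^k C(t) and C(t ++ [k]) = 3 C(t) + 2^(sum t),
   hence 3 C(k :: t) + D = 2^k C(t ++ [k]).  For x = C(k :: t) / D this reads
   3x + 1 = 2^k C(t ++ [k]) / D with C(t ++ [k]) odd, so v2(3x + 1) = k and
   T x = C(t ++ [k]) / D.  As D is invariant under rotation of the sequence,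
   x_j = C(rot^j s) / D, and the first entry of rot^j s is k_(j+1). *)

Lemma v2_pow2_mul_odd_ratio (k : nat) (a b : int) :
  odd `|a| -> odd `|b| -> v2 (2 ^+ k * a%:~R / b%:~R) = k%:Z.
Proof.
move=> odd_a odd_b; set q := _ / _.
have a0 : a != 0 by apply: contraTneq odd_a => ->.
have b0 : b != 0 by apply: contraTneq odd_b => ->.
have q0 : q != 0 by rewrite !mulf_neq0 ?expf_neq0 ?invr_eq0 ?intr_eq0.
have cross : numq q * b = 2 ^+ k * a * denq q.
  apply: (@intr_inj rat); rewrite !rmorphM /= rmorphXn /= numqE /q.
  by field; rewrite intr_eq0.
have abs2 : absz 2 = 2%N by [].
have /(congr1 (logn 2)) := congr1 absz cross.
rewrite !abszM abszX abs2 !lognM ?muln_gt0 ?absz_gt0 ?numq_eq0 ?a0 ?expn_gt0 //.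
rewrite lognX muln1 (logn_coprime (m := `|a|%N)) ?coprime2n //.
rewrite (logn_coprime (m := `|b|%N)) ?coprime2n // !addn0 => e.
by rewrite /v2 (negbTE q0) e PoszD addrK.
Qed.

Definition Dsigma (s : seq nat) : int := (2 ^ sumn s)%N%:Z - (3 ^ size s)%N%:Z.

Lemma odd_Dsigma (s : seq nat) : (0 < sumn s)%N -> odd `|Dsigma s|.
Proof.
move=> pos_s; have odd2 : odd (2 ^ sumn s) = false by rewrite oddX orbF eqn0Ngt pos_s.
have odd3 : odd (3 ^ size s) by rewrite oddX orbT.
rewrite /Dsigma; case: (leqP (3 ^ size s) (2 ^ sumn s)) => [le|/ltnW le].
  by rewrite distnEl // oddB // odd2 odd3.
by rewrite distnEr // oddB // odd2 odd3.
Qed.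

Lemma Dsigma_rot (n : nat) (s : seq nat) : Dsigma (rot n s) = Dsigma s.
Proof. by rewrite /Dsigma sumn_rot size_rot. Qed.

Lemma rhoE (s : seq nat) : rho s = (Csigma s)%:R / (Dsigma s)%:~R.
Proof. by rewrite /rho /Dsigma rmorphB. Qed.

Lemma Csigma_cons (k : nat) (t : seq nat) :
  Csigma (k :: t) = (3 ^ size t + 2 ^ k * Csigma t)%N.
Proof.
rewrite /Csigma (_ : size (k :: t) = (size t).+1) // big_ord_recl big_ord0.
rewrite subn0 subSS subn0 muln1 big_distrr; congr (_ + _)%N.
apply: eq_bigr => i _; rewrite big_ord_recl expnD mulnCA.
by congr (_ * (3 ^ _ * _))%N; rewrite /= -subnDA add1n.
Qed.

Lemma Csigma_rcons (t : seq nat) (k : nat) :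
  Csigma (rcons t k) = (3 * Csigma t + 2 ^ sumn t)%N.
Proof.
have nth_rcons_lt (m : nat) : (m < size t)%N -> nth 0 (rcons t k) m = nth 0 t m.
  by rewrite nth_rcons => ->.
rewrite /Csigma size_rcons big_ord_recr subSS subn0 subnn mul1n big_distrr.
congr (_ + _)%N.
  apply: eq_bigr => i _ /=; have lt_i := ltn_ord i.
  rewrite mulnA -expnS; congr (3 ^ _ * 2 ^ _)%N; first lia.
  by apply: eq_bigr => m _; rewrite nth_rcons_lt // (ltn_trans _ lt_i).
rewrite sumnE (big_nth 0) big_mkord.
by congr (2 ^ _)%N; apply: eq_bigr => i _; rewrite nth_rcons_lt.
Qed.

Lemma Csigma_rot1 (k : nat) (t : seq nat) :
  (3 * Csigma (k :: t) + 2 ^ sumn (k :: t) =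
   2 ^ k * Csigma (rcons t k) + 3 ^ size (k :: t))%N.
Proof. by rewrite Csigma_cons Csigma_rcons /= expnD expnS; ring. Qed.

Lemma odd_Csigma (s : seq nat) : (0 < head 0 s)%N -> odd (Csigma s).
Proof.
case: s => [|k t] //= pos_k.
by rewrite Csigma_cons oddD oddX orbT oddM oddX eqn0Ngt pos_k.
Qed.

Section CollatzStep.

Variables (k : nat) (t : seq nat).
Hypotheses (pos_k : (0 < k)%N) (pos_t : all (fun m => 0 < m)%N t).

Let D : rat := (Dsigma (k :: t))%:~R.

Let odd_D : odd `|Dsigma (k :: t)|.
Proof. by rewrite odd_Dsigma //= addn_gt0 pos_k. Qed.

Let D_neq0 : D != 0.
Proof. by rewrite intr_eq0; apply: contraTneq odd_D => ->. Qed.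

Let odd_Csigma_rcons : odd (Csigma (rcons t k)).
Proof. by apply: odd_Csigma; case: t pos_t => [|a u] //= /andP[]. Qed.

Lemma rho_cons_3x1 :
  3 * rho (k :: t) + 1 = 2 ^+ k * (Csigma (rcons t k))%:R / D.
Proof.
have DE : D = 2 ^+ sumn (k :: t) - 3 ^+ size (k :: t).
  by rewrite /D /Dsigma rmorphB /= -!pmulrn !natrX.
have /(congr1 (fun n => n%:R : rat)) := Csigma_rot1 k t.
rewrite !(natrD, natrM, natrX) rhoE -/D => e.
apply: (mulIf D_neq0); rewrite mulrDl mul1r !mulrA !divfK // DE; lra.
Qed.

Lemma v2_rho_cons_3x1 : v2 (3 * rho (k :: t) + 1) = k%:Z.
Proof.
rewrite rho_cons_3x1 [(Csigma _)%:R]pmulrn.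
by apply: v2_pow2_mul_odd_ratio; [exact: odd_Csigma_rcons | exact: odd_D].
Qed.

Lemma T_rho_cons : T (rho (k :: t)) = rho (rcons t k).
Proof.
rewrite /T v2_rho_cons_3x1 rho_cons_3x1 [rho (rcons t k)]rhoE.
have -> : Dsigma (rcons t k) = Dsigma (k :: t) by rewrite -rot1_cons Dsigma_rot.
by rewrite -/D -exprnP mulrAC [2 ^+ k * _]mulrC mulfK // expf_neq0.
Qed.

End CollatzStep.

Lemma rot_nth_cons {T : Type} (x0 : T) {s : seq T} {j : nat} :
  (j < size s)%N -> rot j s = nth x0 s j :: (drop j.+1 s ++ take j s).
Proof. by move=> lt_j; rewrite /rot (drop_nth x0 lt_j). Qed.

Lemma all_rot {T : Type} (a : pred T) (n : nat) (s : seq T) :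
  all a (rot n s) = all a s.
Proof. by rewrite /rot all_cat andbC -all_cat cat_take_drop. Qed.

Lemma orbitx_rot {s : seq nat} {j : nat} :
  all (fun k => 0 < k)%N s -> (j <= size s)%N -> orbitx s j = rho (rot j s).
Proof.
move=> pos_s; elim: j => [|j IH] lt_j; first by rewrite rot0.
rewrite /orbitx iterS -/(orbitx s j) (IH (ltnW lt_j)) (rotS lt_j).
move: pos_s; rewrite -(all_rot _ j) (rot_nth_cons 0 lt_j) rot1_cons.
by case/andP; apply: T_rho_cons.
Qed.

Theorem mainTheorem9 (s : seq nat) :
  all (fun k => 0 < k)%N s -> (2 <= size s)%N -> (2 <= sumn s)%N ->
  forall j : nat, (j < size s)%N ->
    3 * orbitx s j + 1 != 0 /\ v2 (3 * orbitx s j + 1) = (nth 0%N s j)%:Z.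
Proof.
move=> pos_s _ _ j lt_j; rewrite (orbitx_rot pos_s (ltnW lt_j)).
move: pos_s; rewrite -(all_rot _ j) (rot_nth_cons 0 lt_j) => /andP[pos_k pos_t].
have v2E := v2_rho_cons_3x1 _ _ pos_k pos_t.
split; last exact: v2E.
(* v2 0 = 0, so the positive valuation rules out 3x + 1 = 0. *)
by apply: contra_eq_neq v2E => ->; rewrite /v2 eqxx eqz_nat eq_sym -lt0n.
Qed.
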